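(* Let $m,k\ge 1$ and let $\Delta\in\mathbb{R}^{m\times k}$ be a matrix such that (a) each row of $\Delta$ has at most one nonzero entry, and (b) for every column index $i\in\{1,\dots,k\}$ there exists a row $a$ with $\Delta_{a,i}\neq 0$. Let $\mathbf{L}\in\mathbb{R}^{k\times k}$ be invertible and set $\hat\Delta:=\Delta\mathbf{L}$. If $\|\hat\Delta\|_0\le\|\Delta\|_0$, then $\mathbf{L}$ is a permutation-scaling matrix, i.e. $\mathbf{L}=\mathbf{P}\mathbf{D}$ for a permutation matrix $\mathbf{P}$ and an invertible diagonal matrix $\mathbf{D}$.
   Context: $\|M\|_0$ denotes the number of nonzero entries of a matrix $M$. In the paper, the rows of $\Delta$ are the parameter-change vectors $\delta_a$ indexed by the arcs $a$ of a tree of environments (so $m=|\mathcal{A}|$), and $k$ is the latent dimension. *)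

From HB Require Import structures.
From mathcomp Require Import all_boot all_order all_algebra.
From mathcomp Require Import perm.
From mathcomp Require Import reals.
Set Implicit Arguments. Unset Strict Implicit. Unset Printing Implicit Defensive.
Import Order.TTheory GRing.Theory Num.Theory.
Local Open Scope ring_scope.

Definition nnz (R : ringType) (m n : nat) (M : 'M[R]_(m, n)) : nat :=
  #|[set ij : 'I_m * 'I_n | M ij.1 ij.2 != 0]|.

Definition perm_scaling (R : ringType) (k : nat) (L : 'M[R]_k) : Prop :=
  exists (s : 'S_k) (d : 'rV[R]_k),
    (forall i, d 0 i != 0) /\ L = perm_mx s *m diag_mx d.

From HB Require Import structures.
From mathcomp Require Import all_boot all_order all_algebra.
From mathcomp Require Import perm.
From mathcomp Require Import reals.

Set Implicit Arguments.
Unset Strict Implicit.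
Unset Printing Implicit Defensive.
Import Order.TTheory GRing.Theory Num.Theory.
Local Open Scope ring_scope.

(* Since every row of Delta carries a single nonzero entry, row a of Delta L is
   a nonzero multiple of row c(a) of L, where c(a) is the column of that entry.
   An invertible L has a nonzero entry in each row, so picking one per row
   injects the support of Delta into that of Delta L; if some row of L had two
   nonzero entries, the column of Delta indexed by that row (nonzero by (b))
   would produce an extra nonzero entry of Delta L, contradicting
   ||Delta L||_0 <= ||Delta||_0.  Hence every row of L has exactly one nonzero
   entry; as every column of L also has one, the positions form a permutation. *)

Lemma unitmx_row_neq0 (R : comUnitRingType) n (L : 'M[R]_n) i :
  L \in unitmx -> exists j, L i j != 0.
Proof.
move=> L_unit; apply/existsP; apply: contraT; rewrite negb_exists => /forallP L_i0.
have /matrixP/(_ i i) := mulmxV L_unit; rewrite !mxE eqxx big1 => [/eqP|j _].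
  by rewrite eq_sym oner_eq0.
by move/negPn/eqP: (L_i0 j) => ->; rewrite mul0r.
Qed.

Lemma unitmx_col_neq0 (R : comUnitRingType) n (L : 'M[R]_n) j :
  L \in unitmx -> exists i, L i j != 0.
Proof.
rewrite -unitmx_tr => /(unitmx_row_neq0 j) [i]; rewrite mxE.
by exists i.
Qed.

Section SingleEntryRows.

Variables (R : idomainType) (m k n : nat) (Delta : 'M[R]_(m, k)).
Hypothesis Delta_row_card : forall a, (#|[set i | Delta a i != 0%R]| <= 1)%N.

Lemma Delta_row_eq0 a c l : Delta a c != 0 -> l != c -> Delta a l = 0.
Proof.
move=> Dac_neq0 l_neq_c; apply/eqP; apply: contraNT l_neq_c => Dal_neq0.
by apply/eqP; apply: (card_le1_eqP (Delta_row_card a)); rewrite inE.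
Qed.

Lemma mulmx_single_entry_row (L : 'M[R]_(k, n)) a c j :
  Delta a c != 0 -> (Delta *m L) a j = Delta a c * L c j.
Proof.
move=> Dac_neq0; rewrite mxE (bigD1 c) //= big1 ?addr0 // => l l_neq_c.
by rewrite (Delta_row_eq0 Dac_neq0 l_neq_c) mul0r.
Qed.

Lemma nnz_single_entry_mulmx_lt (L : 'M[R]_(k, n)) (g : 'I_k -> 'I_n) a0 i0 j0 :
  (forall c, L c (g c) != 0) ->
  Delta a0 i0 != 0 -> L i0 j0 != 0 -> j0 != g i0 ->
  (nnz Delta < nnz (Delta *m L))%N.
Proof.
move=> Lg_neq0 Da0i0_neq0 Li0j0_neq0 j0_neq_g.
pose f (ac : 'I_m * 'I_k) := (ac.1, g ac.2).
pose A := [set ac : 'I_m * 'I_k | Delta ac.1 ac.2 != 0].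
pose B := [set aj : 'I_m * 'I_n | (Delta *m L) aj.1 aj.2 != 0].
have f_inj : {in A &, injective f}.
  move=> [a c] [a' c']; rewrite !inE /f /= => Dac_neq0 + [a_eq _].
  rewrite -a_eq => Dac'_neq0; congr (_, _); apply/eqP.
  apply: contraT; rewrite eq_sym => c'_neq_c.
  by rewrite (Delta_row_eq0 Dac_neq0 c'_neq_c) eqxx in Dac'_neq0.
have fA_sub_B : f @: A \subset B.
  apply/subsetP => _ /imsetP [[a c] Dac_neq0 ->]; move: Dac_neq0; rewrite !inE /=.
  by move=> Dac_neq0; rewrite (mulmx_single_entry_row _ _ Dac_neq0) mulf_neq0.
have a0j0_notin_fA : (a0, j0) \notin f @: A.
  apply/imsetP => [[[a c]]]; rewrite inE /= => Dac_neq0 [a0_eq j0_eq].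
  have [c_eq | c_neq_i0] := eqVneq c i0; first by rewrite j0_eq c_eq eqxx in j0_neq_g.
  by rewrite -a0_eq (Delta_row_eq0 Da0i0_neq0 c_neq_i0) eqxx in Dac_neq0.
have a0j0_in_B : (a0, j0) \in B.
  by rewrite inE /= (mulmx_single_entry_row _ _ Da0i0_neq0) mulf_neq0.
rewrite /nnz -/A -/B -(card_in_imset f_inj); apply: proper_card.
by apply/properP; split=> //; exists (a0, j0).
Qed.

End SingleEntryRows.

Lemma perm_scaling_of_row_support (R : nzRingType) k (L : 'M[R]_k) (g : 'I_k -> 'I_k) :
  (forall i j, (L i j != 0) = (j == g i)) -> (forall j, exists i, L i j != 0) ->
  perm_scaling L.
Proof.
move=> L_supp L_col.
have g_inj : injective g.
  have g_onto : forall j, j \in codom g.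
    by move=> j; have [i] := L_col j; rewrite L_supp => /eqP ->; apply: codom_f.
  have /image_injP g_inj_in : #|codom g| == #|'I_k|.
    by apply/eqP/eq_card => j; rewrite g_onto.
  by move=> i i'; apply: g_inj_in.
pose s := perm g_inj.
exists s, (\row_j L ((s^-1)%g j) j); split.
  by move=> j; rewrite mxE L_supp -{1}(permKV s j) permE.
apply/matrixP => i j; rewrite mul_mx_diag !mxE.
have [<-|j_neq] := eqVneq (s i) j; first by rewrite permK mul1r.
by rewrite mul0r; apply/eqP; rewrite -[_ == 0]negbK L_supp -(permE g_inj i) eq_sym.
Qed.

Theorem proposition4p7 (R : realType) (m k : nat) (Hm : (1 <= m)%N) (Hk : (1 <= k)%N)
  (Delta : 'M[R]_(m, k)) (L : 'M[R]_k)
  (Ha : forall a : 'I_m, (#|[set i : 'I_k | Delta a i != 0%R]| <= 1)%N)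
  (Hb : forall i : 'I_k, exists a : 'I_m, Delta a i != 0)
  (HL : L \in unitmx)
  (Hnnz : (nnz (Delta *m L) <= nnz Delta)%N) :
  perm_scaling L.
Proof.
have [g Lg_neq0] := fin_all_exists (fun i => unitmx_row_neq0 i HL).
apply: (@perm_scaling_of_row_support _ _ _ g); last by move=> j; exact: unitmx_col_neq0.
move=> i j; apply/idP/eqP => [Lij_neq0 | ->]; last exact: Lg_neq0.
apply/eqP; apply: contraT => j_neq_g; have [a Dai_neq0] := Hb i.
have := nnz_single_entry_mulmx_lt Ha Lg_neq0 Dai_neq0 Lij_neq0 j_neq_g.
by rewrite ltnNge Hnnz.
Qed.
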